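(* Let $\mathfrak{g}=\prod_{i=1}^k\mathfrak{q}_i$ be a semisimple complex Lie algebra with each $\mathfrak{q}_i$ simple of type $A_{n_i}$. Let $r$ denote the rank of $\mathfrak{g}$ and let $V$ be a faithful representation of $\mathfrak{g}$. Let $\langle-,-\rangle$ be any $W_{\mathfrak{g}}$-invariant inner product on $\Lambda_{\mathfrak{g}}\otimes\mathbb{R}$, and let $W_{\max}$ denote the set of weights of $V$ of maximal norm. If $W_{\max}$ spans $\Lambda_{\mathfrak{g}}\otimes\mathbb{R}$, then $\#W_{\max}\geq r+1$, with equality holding possibly only if $k=1$.
   Context: $\Lambda_{\mathfrak{g}}$ is the weight lattice of $\mathfrak{g}$ (with respect to a fixed Cartan subalgebra) and $W_{\mathfrak{g}}$ its Weyl group; weights of $V$ are the characters of the Cartan subalgebra occurring in $V$. *)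

From HB Require Import structures.
From mathcomp Require Import all_boot all_order all_algebra.
From mathcomp Require Import perm.
From mathcomp Require Import complex.
From mathcomp Require Import reals.
Set Implicit Arguments. Unset Strict Implicit. Unset Printing Implicit Defensive.
Import Order.TTheory GRing.Theory Num.Theory.
Local Open Scope ring_scope.

(* g = prod_{b < k} sl_{m_b}(C), m_b >= 2 (type A_{m_b - 1}), realized as the
   Lie algebra of block-diagonal N x N complex matrices, the blocks being the
   fibres of a labelling c : 'I_N -> 'I_k, each block having trace zero. *)

Definition valid_blocks (N k : nat) (c : 'I_N -> 'I_k) : Prop :=
  forall b : 'I_k, (2 <= #|[pred i | c i == b]|)%N.

Definition blocksum0 (T : nmodType) (N k : nat) (c : 'I_N -> 'I_k)
  (x : 'rV[T]_N) : bool :=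
  [forall b : 'I_k, \sum_(i | c i == b) x 0 i == 0].

Definition in_g (R : realType) (N k : nat) (c : 'I_N -> 'I_k)
  (X : 'M[R[i]]_N) : bool :=
  [forall i, forall j, (c i != c j) ==> (X i j == 0)] &&
  blocksum0 c (\row_i X i i).

Definition lie_bracket (F : pzRingType) (n : nat) (X Y : 'M[F]_n) : 'M[F]_n :=
  X *m Y - Y *m X.

Definition is_rep (R : realType) (N k d : nat) (c : 'I_N -> 'I_k)
  (rho : 'M[R[i]]_N -> 'M[R[i]]_d) : Prop :=
  (forall (a : R[i]) X Y, in_g c X -> in_g c Y ->
      rho (a *: X + Y) = a *: rho X + rho Y) /\
  (forall X Y, in_g c X -> in_g c Y ->
      rho (lie_bracket X Y) = lie_bracket (rho X) (rho Y)).

Definition faithful (R : realType) (N k d : nat) (c : 'I_N -> 'I_k)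
  (rho : 'M[R[i]]_N -> 'M[R[i]]_d) : Prop :=
  forall X, in_g c X -> rho X = 0 -> X = 0.

(* Cartan subalgebra h = diagonal matrices diag_mx t of g (blocksum0 t).
   h^* is identified with {a in C^N | blocksum0 a} via
   a(diag_mx t) = \sum_j a_j t_j; Lambda_g (x) R is then the real subspace
   E = {x in R^N | blocksum0 x}.  A vector x in E is a weight of V if the
   corresponding character occurs in V (all weights of a finite-dimensional
   representation are real, so nothing is lost by taking x real). *)
Definition is_weight (R : realType) (N k d : nat) (c : 'I_N -> 'I_k)
  (rho : 'M[R[i]]_N -> 'M[R[i]]_d) (x : 'rV[R]_N) : Prop :=
  blocksum0 c x /\
  exists v : 'cV[R[i]]_d, v != 0 /\
    forall t : 'rV[R[i]]_N, blocksum0 c t ->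
      rho (diag_mx t) *m v = (\sum_j Complex (x 0 j) 0 * t 0 j) *: v.

Definition bform (R : realType) (N : nat) (B : 'M[R]_N) (x y : 'rV[R]_N) : R :=
  (x *m B *m y^T) 0 0.

Definition inner_product_on_E (R : realType) (N k : nat) (c : 'I_N -> 'I_k)
  (B : 'M[R]_N) : Prop :=
  (forall x y, blocksum0 c x -> blocksum0 c y -> bform B x y = bform B y x) /\
  (forall x, blocksum0 c x -> x != 0 -> 0 < bform B x x).

(* W_g = prod_b S_{m_b}, acting on E by permuting coordinates inside blocks *)
Definition weyl_invariant (R : realType) (N k : nat) (c : 'I_N -> 'I_k)
  (B : 'M[R]_N) : Prop :=
  forall s : 'S_N, (forall i, c (s i) = c i) ->
  forall x y, blocksum0 c x -> blocksum0 c y ->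
    bform B (col_perm s x) (col_perm s y) = bform B x y.

Definition max_weight (R : realType) (N k d : nat) (c : 'I_N -> 'I_k)
  (rho : 'M[R[i]]_N -> 'M[R[i]]_d) (B : 'M[R]_N) (x : 'rV[R]_N) : Prop :=
  is_weight c rho x /\
  (forall y, is_weight c rho y -> bform B y y <= bform B x x).

Definition spans_E (R : realType) (N k : nat) (c : 'I_N -> 'I_k)
  (s : seq 'rV[R]_N) : Prop :=
  forall x, blocksum0 c x ->
    exists coef : 'I_(size s) -> R, x = \sum_(j < size s) coef j *: s`_j.

From HB Require Import structures.
From mathcomp Require Import all_boot all_order all_algebra.
From mathcomp Require Import perm.
From mathcomp Require Import complex.
From mathcomp Require Import reals.
From mathcomp Require Import ring zify.
From Stdlib Require Import Classical.
Import Order.TTheory GRing.Theory Num.Theory.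
Local Open Scope ring_scope.
Set Implicit Arguments. Unset Strict Implicit. Unset Printing Implicit Defensive.

(* For a root e_i - e_j, the sl_2-string through a weight x shows that the
   reflection of x, i.e. x with the coordinates i and j swapped, is again a
   weight; it has the same norm, so W_max is stable under the transpositions
   inside a block.  Averaging over these transpositions, every vector of E
   that they fix is zero; hence \sum_{x in W_max} a(x) x = 0 for every
   invariant function a, and also \sum_{x in W_max} x_i x_j x = 0 when i and
   j lie in different blocks.  With a = 1 we get a nontrivial relation among
   vectors spanning the r-dimensional space E, so #W_max >= r + 1.  If
   #W_max = r + 1 the relations form a line, so all of them have constant
   coefficients.  Taking a(x) = the squared norm of x on one block, every
   x in W_max has a nonzero coordinate in every block; taking the relation
   x_i x_j with x_j <> 0 then forces x to be constant, hence zero, on the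
   block of i, which is absurd as soon as k >= 2. *)

Definition pairing (F : pzRingType) N (lam t : 'rV[F]_N) : F :=
  \sum_j lam 0 j * t 0 j.

Definition root_vec (F : pzRingType) N (i j : 'I_N) : 'rV[F]_N :=
  delta_mx 0 i - delta_mx 0 j.
Arguments root_vec {F N}.

Lemma pairingC (F : comPzRingType) N (lam t : 'rV[F]_N) :
  pairing lam t = pairing t lam.
Proof. by apply: eq_bigr => j _; rewrite mulrC. Qed.

Lemma pairingDZl (F : pzRingType) N (lam al t : 'rV[F]_N) (a : F) :
  pairing (lam + a *: al) t = pairing lam t + a * pairing al t.
Proof.
rewrite /pairing mulr_sumr -big_split /=; apply: eq_bigr => j _.
by rewrite !mxE mulrDl mulrA.
Qed.

Lemma pairing_root_vec (F : pzRingType) N (i j : 'I_N) (t : 'rV[F]_N) :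
  pairing (root_vec i j) t = t 0 i - t 0 j.
Proof.
have pick l : \sum_m (delta_mx 0 l : 'rV[F]_N) 0 m * t 0 m = t 0 l.
  rewrite (bigD1 l) //= big1 => [|m /negbTE ml]; first by rewrite mxE !eqxx mul1r addr0.
  by rewrite mxE ml mul0r.
by rewrite -!pick -sumrB; apply: eq_bigr => l _; rewrite !mxE mulrBl.
Qed.

Lemma col_perm_tperm (F : comPzRingType) N (x : 'rV[F]_N) (i j : 'I_N) :
  col_perm (tperm i j) x = x - (x 0 i - x 0 j) *: root_vec i j.
Proof.
have [<-|ij] := eqVneq i j; first by rewrite tperm1 col_perm1 subrr scale0r subr0.
apply/matrixP => z l; rewrite ord1 !mxE !eqxx /=.
have [->|li] := eqVneq l i; first by rewrite tpermL (negPf ij) /=; ring.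
have [->|lj] := eqVneq l j; first by rewrite tpermR /=; ring.
by rewrite tpermD 1?eq_sym //= subrr mulr0 subr0.
Qed.

Lemma iter_eigen_last_nonzero (F : numFieldType) d (h A : 'M[F]_d)
    (mu : nat -> F) (v : 'cV[F]_d) :
  injective mu -> v != 0 ->
  (forall m, h *m iter m (mulmx A) v = mu m *: iter m (mulmx A) v) ->
  exists m, (forall p, (p <= m)%N -> iter p (mulmx A) v != 0) /\
            A *m iter m (mulmx A) v = 0.
Proof.
move=> mu_inj v0 eigen.
have vanish : exists n, iter n (mulmx A) v == 0.
  apply: NNPP => /not_ex_all_not nonzero.
  have P0 : char_poly h^T != 0 := monic_neq0 (char_poly_monic _).
  suff : (size (char_poly h^T) < size (char_poly h^T))%N by rewrite ltnn.
  rewrite -[X in (X < _)%N](size_iota 0) -(size_map mu).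
  apply: max_poly_roots P0 _ _; last by rewrite map_inj_uniq ?iota_uniq.
  apply/allP => _ /mapP [m _ ->]; rewrite -eigenvalue_root_char.
  apply/eigenvalueP; exists (iter m (mulmx A) v)^T.
    by rewrite -trmx_mul eigen linearZ.
  by rewrite trmx_eq0; apply/negP; apply: nonzero.
have [[|m] vm0 min_m] := ex_minnP vanish; first by rewrite /= (negPf v0) in vm0.
exists m; split; last exact/eqP.
by move=> p le_pm; apply/negP => /min_m; rewrite ltnNge le_pm.
Qed.

Section WeightStrings.

Variables (F : numFieldType) (N d : nat).
Variables (bs : pred 'rV[F]_N) (D : 'rV[F]_N -> 'M[F]_d).

Definition weight_vector (lam : 'rV[F]_N) (v : 'cV[F]_d) :=
  forall t, bs t -> D t *m v = pairing lam t *: v.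

Variables (e f : 'M[F]_d) (al h : 'rV[F]_N).
Hypothesis De : forall t, bs t -> D t *m e = e *m D t + pairing al t *: e.
Hypothesis Df : forall t, bs t -> D t *m f = f *m D t - pairing al t *: f.
Hypothesis ef : e *m f - f *m e = D h.
Hypothesis bs_h : bs h.
Hypothesis al_h : pairing al h = 2.

Lemma weight_vector_e lam a w :
  weight_vector (lam + a *: al) w -> weight_vector (lam + (a + 1) *: al) (e *m w).
Proof.
move=> Ww t bt; rewrite mulmxA De // mulmxDl -mulmxA Ww //.
by rewrite -scalemxAr -scalemxAl -scalerDl !pairingDZl mulrDl mul1r addrA.
Qed.

Lemma weight_vector_f lam a w :
  weight_vector (lam + a *: al) w -> weight_vector (lam + (a - 1) *: al) (f *m w).
Proof.
move=> Ww t bt; rewrite mulmxA Df // mulmxBl -mulmxA Ww //.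
by rewrite -scalemxAr -scalemxAl -scalerBl !pairingDZl mulrBl mul1r addrA.
Qed.

Lemma weight_vector_iter_e lam v m :
  weight_vector lam v -> weight_vector (lam + m%:R *: al) (iter m (mulmx e) v).
Proof.
move=> Wv; elim: m => [|m IHm] /=; first by rewrite scale0r addr0.
by rewrite -natr1; apply: weight_vector_e.
Qed.

Lemma weight_vector_iter_f lam u p :
  weight_vector lam u -> weight_vector (lam - p%:R *: al) (iter p (mulmx f) u).
Proof.
move=> Wu; elim: p => [|p IHp] /=; first by rewrite scale0r subr0.
by rewrite -scaleNr -natr1 opprD; apply: weight_vector_f; rewrite scaleNr.
Qed.

Lemma h_iter_f lam u p : weight_vector lam u ->
  D h *m iter p (mulmx f) u = (pairing lam h - (2 * p)%:R) *: iter p (mulmx f) u.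
Proof.
move=> Wu; rewrite (weight_vector_iter_f p Wu) // -scaleNr pairingDZl al_h.
by rewrite natrM; congr (_ *: _); ring.
Qed.

Lemma weight_vector_highest lam v : weight_vector lam v -> v != 0 ->
  exists m, [/\ iter m (mulmx e) v != 0, e *m iter m (mulmx e) v = 0 &
                weight_vector (lam + m%:R *: al) (iter m (mulmx e) v)].
Proof.
move=> Wv v0; pose mu m := pairing lam h + (2 * m)%:R.
have mu_inj : injective mu.
  by move=> m n /addrI /eqP; rewrite eqr_nat eqn_mul2l /= => /eqP.
have eigen m : D h *m iter m (mulmx e) v = mu m *: iter m (mulmx e) v.
  rewrite (weight_vector_iter_e m Wv) // pairingDZl al_h /mu natrM.
  by congr (_ *: _); ring.
have [m [nz top]] := iter_eigen_last_nonzero mu_inj v0 eigen.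
by exists m; split; [exact: nz | exact: top | exact: weight_vector_iter_e].
Qed.

Lemma e_iter_f lam u p : weight_vector lam u -> e *m u = 0 ->
  e *m iter p.+1 (mulmx f) u =
  (p.+1%:R * (pairing lam h - p%:R)) *: iter p (mulmx f) u.
Proof.
move=> Wu eu; have ef' : e *m f = f *m e + D h by rewrite -ef addrC subrK.
elim: p => [|p IHp].
  by rewrite /= mulmxA ef' mulmxDl -mulmxA eu mulmx0 add0r (Wu h) // mul1r subr0.
rewrite [iter p.+2 _ _]/= mulmxA ef' mulmxDl -mulmxA IHp (h_iter_f p.+1 Wu).
rewrite -scalemxAr -scalerDl; congr (_ *: _).
by rewrite natrM -!natr1; ring.
Qed.

Lemma highest_weight_string lam u : weight_vector lam u -> u != 0 -> e *m u = 0 ->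
  exists q : nat, pairing lam h = q%:R /\
                  forall p, (p <= q)%N -> iter p (mulmx f) u != 0.
Proof.
move=> Wu u0 eu; pose mu p := pairing lam h - (2 * p)%:R.
have mu_inj : injective mu.
  by move=> p q /addrI /oppr_inj /eqP; rewrite eqr_nat eqn_mul2l /= => /eqP.
have [q [nz bottom]] := iter_eigen_last_nonzero mu_inj u0 (fun p => h_iter_f p Wu).
exists q; split=> //; apply/eqP.
have := e_iter_f q Wu eu; rewrite [iter q.+1 _ _]/= bottom mulmx0 => /esym/eqP.
rewrite scaler_eq0 (negPf (nz q (leqnn q))) orbF mulf_eq0 pnatr_eq0 /=.
by rewrite subr_eq0.
Qed.

Lemma weight_vector_reflect lam v :
  weight_vector lam v -> v != 0 -> 0 <= pairing lam h ->
  exists2 w, w != 0 & weight_vector (lam - pairing lam h *: al) w.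
Proof.
move=> Wv v0 lam_h_ge0.
have [m [u0 eu Wu]] := weight_vector_highest Wv v0.
have [q [qE nz]] := highest_weight_string Wu u0 eu.
have lam_hE : pairing lam h = q%:R - (2 * m)%:R.
  by rewrite -qE pairingDZl al_h natrM; ring.
have le_2m_q : (2 * m <= q)%N by rewrite -(ler_nat F) -subr_ge0 -lam_hE.
exists (iter (q - m) (mulmx f) (iter m (mulmx e) v)); first exact/nz/leq_subr.
have -> : lam - pairing lam h *: al = lam + m%:R *: al - (q - m)%:R *: al.
  rewrite -addrA -scalerBl -scaleNr lam_hE natrB; last by lia.
  by congr (_ + _ *: _); rewrite natrM; ring.
exact: weight_vector_iter_f.
Qed.

End WeightStrings.

Section BlockDiagonal.

Variables (N k : nat) (c : 'I_N -> 'I_k).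

Lemma block_tperm (i j : 'I_N) : c i = c j -> forall l, c (tperm i j l) = c l.
Proof. by move=> cij l; case: tpermP => [->|->|]. Qed.

Lemma blocksum0_root_vec (T : pzRingType) (i j : 'I_N) :
  c i = c j -> blocksum0 c (root_vec i j : 'rV[T]_N).
Proof.
move=> cij; apply/forallP => b; apply/eqP.
have block_delta l : \sum_(m | c m == b) (delta_mx 0 l : 'rV[T]_N) 0 m = (c l == b)%:R.
  rewrite (big_mkcond (fun m => c m == b)) (bigD1 l) //= big1 => [|m /negbTE ml].
    by rewrite !mxE !eqxx addr0; case: (c l == b).
  by rewrite !mxE eq_sym ml /= if_same.
rewrite (eq_bigr (fun m => (delta_mx 0 i : 'rV[T]_N) 0 m - (delta_mx 0 j : 'rV[T]_N) 0 m)).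
  by rewrite sumrB !block_delta cij subrr.
by move=> m _; rewrite !mxE.
Qed.

Lemma blocksum0_col_perm (T : nmodType) (s : 'S_N) (x : 'rV[T]_N) :
  (forall l, c (s l) = c l) -> blocksum0 c x -> blocksum0 c (col_perm s x).
Proof.
move=> cs /forallP bx; apply/forallP => b; apply/eqP.
transitivity (\sum_(l | c l == b) x 0 l); last exact/eqP.
rewrite [RHS](reindex_inj (@perm_inj _ s)) /=.
by apply: eq_big => l; rewrite ?cs // !mxE.
Qed.

Variable R : realType.

Lemma in_g0 : in_g c (0 : 'M[R[i]]_N).
Proof.
apply/andP; split.
  by apply/forallP => a; apply/forallP => b; apply/implyP; rewrite mxE.
by apply/forallP => b; apply/eqP; apply: big1 => l _; rewrite !mxE.
Qed.

Lemma in_g_diag (t : 'rV[R[i]]_N) : blocksum0 c t -> in_g c (diag_mx t).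
Proof.
move=> bt; apply/andP; split.
  apply/forallP => a; apply/forallP => b; apply/implyP => cab.
  rewrite mxE; case: (eqVneq a b) => [ab|]; last by rewrite mulr0n.
  by move: cab; rewrite ab eqxx.
suff -> : \row_l diag_mx t l l = t by [].
by apply/matrixP => a b; rewrite !mxE ord1 eqxx mulr1n.
Qed.

Lemma in_g_delta (i j : 'I_N) :
  i != j -> c i = c j -> in_g c (delta_mx i j : 'M[R[i]]_N).
Proof.
move=> ij cij; apply/andP; split.
  apply/forallP => a; apply/forallP => b; apply/implyP => cab.
  rewrite mxE; case: (eqVneq a i) => [ai|//]; case: (eqVneq b j) => [bj|//].
  by move: cab; rewrite ai bj cij eqxx.
apply/forallP => b; apply/eqP; apply: big1 => l _; rewrite !mxE.
by case: (eqVneq l i) => [->|//]; rewrite (negPf ij).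
Qed.

End BlockDiagonal.

Lemma lie_bracket_diag_delta (F : comPzRingType) N (t : 'rV[F]_N) (i j : 'I_N) :
  lie_bracket (diag_mx t) (delta_mx i j) = (t 0 i - t 0 j) *: delta_mx i j.
Proof.
apply/matrixP => a b; rewrite /lie_bracket mul_diag_mx mul_mx_diag !mxE.
case: (eqVneq a i) => [->|ai]; case: (eqVneq b j) => [->|bj] /=;
  by rewrite ?mulr1 ?mul1r ?mulr0 ?mul0r ?subr0 ?andbF.
Qed.

Lemma lie_bracket_delta (F : comPzRingType) N (i j : 'I_N) : i != j ->
  lie_bracket (delta_mx i j) (delta_mx j i) = diag_mx (root_vec i j) :> 'M[F]_N.
Proof.
move=> ij; rewrite /lie_bracket !mul_delta_mx; apply/matrixP => a b; rewrite !mxE /=.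
have [<-|ab] := eqVneq a b; first by rewrite !andbb mulr1n.
have no_diag l : (a == l) && (b == l) = false.
  by apply/negbTE/andP => [[/eqP al /eqP bl]]; move: ab; rewrite al bl eqxx.
by rewrite !no_diag mulr0n subrr.
Qed.

Section Representation.

Variables (R : realType) (N k d : nat) (c : 'I_N -> 'I_k).
Variable rho : 'M[R[i]]_N -> 'M[R[i]]_d.
Hypothesis rho_rep : is_rep c rho.

Lemma rep0 : rho 0 = 0.
Proof.
have := rho_rep.1 1 0 0 (in_g0 c R) (in_g0 c R); rewrite !scale1r !addr0 => r00.
by apply: (addrI (rho 0)); rewrite addr0 -r00.
Qed.

Lemma repZ a X : in_g c X -> rho (a *: X) = a *: rho X.
Proof.
move=> gX; have := rho_rep.1 a X 0 gX (in_g0 c R).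
by rewrite addr0 rep0 addr0.
Qed.

Lemma rep_diag_delta (t : 'rV[R[i]]_N) (i j : 'I_N) :
  blocksum0 c t -> i != j -> c i = c j ->
  rho (diag_mx t) *m rho (delta_mx i j) =
  rho (delta_mx i j) *m rho (diag_mx t) + (t 0 i - t 0 j) *: rho (delta_mx i j).
Proof.
move=> bt ij cij; have gE := in_g_delta R ij cij.
have := rho_rep.2 _ _ (in_g_diag bt) gE.
by rewrite lie_bracket_diag_delta repZ // /lie_bracket => ->; rewrite addrC subrK.
Qed.

Lemma is_weightP (x : 'rV[R]_N) : is_weight c rho x <->
  blocksum0 c x /\ exists2 v, v != 0 &
    weight_vector (blocksum0 c) (fun t => rho (diag_mx t)) (map_mx (real_complex R) x) v.
Proof.
have pairingE t : pairing (map_mx (real_complex R) x) t = \sum_j Complex (x 0 j) 0 * t 0 j.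
  by apply: eq_bigr => j _; rewrite mxE.
split=> [[bx [v [v0 Wv]]]|[bx [v v0 Wv]]]; split=> //.
  by exists v => // t bt; rewrite pairingE Wv.
by exists v; split=> // t bt; rewrite -pairingE Wv.
Qed.

Lemma is_weight_tperm (x : 'rV[R]_N) (i j : 'I_N) :
  c i = c j -> is_weight c rho x -> is_weight c rho (col_perm (tperm i j) x).
Proof.
wlog le_ji : i j / x 0 j <= x 0 i.
  move=> wlog_ij; case: (lerP (x 0 j) (x 0 i)) => [|/ltW le_ij]; first exact: wlog_ij.
  by move=> cij; rewrite tpermC; apply: wlog_ij.
move=> cij; have [<-|ij] := eqVneq i j; first by rewrite tperm1 col_perm1.
have ji : j != i by rewrite eq_sym.
move=> /is_weightP [bx [v v0 Wv]]; apply/is_weightP; split.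
  exact: blocksum0_col_perm (block_tperm cij) bx.
set xc := map_mx (real_complex R) x.
have De t : blocksum0 c t -> rho (diag_mx t) *m rho (delta_mx i j) =
    rho (delta_mx i j) *m rho (diag_mx t) + pairing (root_vec i j) t *: rho (delta_mx i j).
  by move=> bt; rewrite pairing_root_vec rep_diag_delta.
have Df t : blocksum0 c t -> rho (diag_mx t) *m rho (delta_mx j i) =
    rho (delta_mx j i) *m rho (diag_mx t) - pairing (root_vec i j) t *: rho (delta_mx j i).
  by move=> bt; rewrite pairing_root_vec rep_diag_delta // -opprB scaleNr.
have ef : rho (delta_mx i j) *m rho (delta_mx j i) - rho (delta_mx j i) *m rho (delta_mx i j)
    = rho (diag_mx (root_vec i j)).
  by rewrite -lie_bracket_delta // rho_rep.2 // in_g_delta.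
have al_al : pairing (root_vec i j) (root_vec i j) = 2 :> R[i].
  by rewrite pairing_root_vec !mxE !eqxx (negPf ij) (negPf ji) /= subr0 sub0r opprK.
have xc_al : pairing xc (root_vec i j) = xc 0 i - xc 0 j by rewrite pairingC pairing_root_vec.
have [|w w0 Ww] := weight_vector_reflect De Df ef (blocksum0_root_vec _ cij) al_al Wv v0.
  by rewrite xc_al !mxE -rmorphB /= ler0c subr_ge0.
by exists w; rewrite // map_col_perm col_perm_tperm -xc_al.
Qed.

Lemma max_weight_tperm (B : 'M[R]_N) (x : 'rV[R]_N) (i j : 'I_N) :
  weyl_invariant c B -> c i = c j ->
  max_weight c rho B x -> max_weight c rho B (col_perm (tperm i j) x).
Proof.
move=> weyl cij [wx x_max]; split; first exact: is_weight_tperm.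
by move=> y wy; rewrite weyl ?x_max //; [exact: block_tperm | exact: wx.1 | exact: wx.1].
Qed.

End Representation.

Definition tperm_closed (T : eqType) N k (c : 'I_N -> 'I_k) (s : seq 'rV[T]_N) :=
  forall x i j, x \in s -> c i = c j -> col_perm (tperm i j) x \in s.

Lemma block_const_eq0 (R : numDomainType) N k (c : 'I_N -> 'I_k) (phi : 'I_N -> R) l :
  \sum_(l' | c l' == c l) phi l' = 0 -> (forall l', c l' = c l -> phi l' = phi l) ->
  phi l = 0.
Proof.
move=> sum0 const; move: sum0; rewrite (eq_bigr (fun=> phi l)); last first.
  by move=> l' /eqP; apply: const.
rewrite sumr_const => /eqP; rewrite mulrn_eq0 => /orP [|/eqP //].
by move=> /eqP /card0_eq /(_ l); rewrite unfold_in /= eqnE eqxx.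
Qed.

Section InvariantSums.

Variables (R : numDomainType) (N k : nat) (c : 'I_N -> 'I_k) (s : seq 'rV[R]_N).
Hypotheses (s_uniq : uniq s) (s_closed : tperm_closed c s).
Hypothesis s_E : forall x, x \in s -> blocksum0 c x.

Lemma big_tperm_closed (V : nmodType) (g : 'rV[R]_N -> V) (i j : 'I_N) :
  c i = c j -> \sum_(x <- s) g x = \sum_(x <- s) g (col_perm (tperm i j) x).
Proof.
move=> cij; pose sw (x : 'rV[R]_N) := col_perm (tperm i j) x.
have swK : involutive sw by move=> x; apply/matrixP => a b; rewrite !mxE tpermK.
have perm_s : perm_eq s (map sw s).
  apply: uniq_perm => //; first by rewrite map_inj_uniq //; apply: inv_inj.
  move=> y; apply/idP/mapP => [ys|[x xs ->]]; last exact: s_closed.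
  by exists (sw y); [exact: s_closed | rewrite swK].
by rewrite (perm_big _ perm_s) big_map.
Qed.

Lemma sum_scale_mxE (a : 'rV[R]_N -> R) l :
  (\sum_(x <- s) a x *: x) 0 l = \sum_(x <- s) a x * x 0 l.
Proof. by rewrite summxE; apply: eq_bigr => x _; rewrite mxE. Qed.

(* The function l' |-> \sum_x a x * x_l' is constant on the block of l by
   the symmetry of s, and its block sum vanishes since s lies in E. *)
Lemma sum_mul_coord_eq0 (a : 'rV[R]_N -> R) l :
  (forall x l', x \in s -> c l' = c l -> a (col_perm (tperm l' l) x) = a x) ->
  \sum_(x <- s) a x * x 0 l = 0.
Proof.
move=> a_inv; apply: (block_const_eq0 (c := c) (phi := fun l => \sum_(x <- s) a x * x 0 l)).
  rewrite exchange_big /= big_seq big1 // => x xs.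
  by rewrite -mulr_sumr (eqP (forallP (s_E xs) (c l))) mulr0.
move=> l' cl' /=; rewrite (big_tperm_closed _ cl') !big_seq; apply: eq_bigr => x xs.
by rewrite a_inv // mxE tpermL.
Qed.

Lemma sum_invariant_scale_eq0 (a : 'rV[R]_N -> R) :
  (forall x i j, x \in s -> c i = c j -> a (col_perm (tperm i j) x) = a x) ->
  \sum_(x <- s) a x *: x = 0.
Proof.
move=> a_inv; apply/matrixP => z l; rewrite ord1 sum_scale_mxE mxE.
by apply: sum_mul_coord_eq0 => x l' xs cl'; apply: a_inv.
Qed.

Lemma col_perm_tperm_other_block (x : 'rV[R]_N) (l' p q : 'I_N) :
  c q != c p -> c l' = c p -> (col_perm (tperm l' p) x) 0 q = x 0 q.
Proof.
move=> cqp cl'; rewrite mxE tpermD //; apply: contraNneq cqp => <- //.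
by rewrite cl'.
Qed.

Lemma sum_cross_scale_eq0 (i j : 'I_N) :
  c i != c j -> \sum_(x <- s) (x 0 i * x 0 j) *: x = 0.
Proof.
move=> cij; apply/matrixP => z l; rewrite ord1 sum_scale_mxE mxE.
have [cli|cli] := eqVneq (c l) (c i).
  rewrite (eq_bigr (fun x : 'rV[R]_N => x 0 i * x 0 l * x 0 j)) => [|x _]; last by ring.
  apply: (sum_mul_coord_eq0 (a := fun x => x 0 i * x 0 l)) => x l' _ cl'.
  by rewrite !col_perm_tperm_other_block // cli.
rewrite (eq_bigr (fun x : 'rV[R]_N => x 0 j * x 0 l * x 0 i)) => [|x _]; last by ring.
apply: (sum_mul_coord_eq0 (a := fun x => x 0 j * x 0 l)) => x l' _ cl'.
by rewrite !col_perm_tperm_other_block // eq_sym.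
Qed.

End InvariantSums.

Lemma ker_colinear (F : fieldType) m n (S : 'M[F]_(m, n)) (u a : 'rV[F]_m) :
  (m <= \rank S + 1)%N -> u != 0 -> u *m S = 0 -> a *m S = 0 -> exists t, a = t *: u.
Proof.
move=> corank u0 /sub_kermxP uK /sub_kermxP aK.
have Ku : (kermx S <= u)%MS.
  rewrite -(geq_leqif (mxrank_leqif_sup uK)) mxrank_ker rank_rV u0; lia.
by apply/sub_rVP; apply: submx_trans Ku.
Qed.

Lemma row1_neq0 (F : nzRingType) m : (0 < m)%N -> \row_(p < m) (1 : F) != 0.
Proof.
move=> m_gt0; apply/eqP => /matrixP /(_ 0 (Ordinal m_gt0)).
by rewrite !mxE; apply/eqP; rewrite oner_eq0.
Qed.

Lemma mxrank_lt_ker (F : fieldType) m n (S : 'M[F]_(m, n)) (u : 'rV[F]_m) :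
  u != 0 -> u *m S = 0 -> (\rank S < m)%N.
Proof.
move=> u0 /sub_kermxP /mxrankS; rewrite mxrank_ker rank_rV u0.
have := rank_leq_row S; lia.
Qed.

Section SeqMatrix.

Variables (F : fieldType) (N : nat) (s : seq 'rV[F]_N).

Definition seqmx : 'M[F]_(size s, N) := \matrix_(p < size s) s`_p.

Lemma mul_row_seqmx (a : 'I_(size s) -> F) :
  (\row_p a p) *m seqmx = \sum_(p < size s) a p *: s`_p.
Proof. by rewrite mulmx_sum_row; apply: eq_bigr => p _; rewrite rowK mxE. Qed.

Lemma big_seq_scaleE (a : 'rV[F]_N -> F) :
  \sum_(x <- s) a x *: x = (\row_p a s`_p) *m seqmx.
Proof. by rewrite mul_row_seqmx (big_nth 0) big_mkord. Qed.

Lemma row1_mul_seqmx : (\row_(p < size s) 1) *m seqmx = \sum_(x <- s) x.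
Proof. by rewrite -(big_seq_scaleE (fun=> 1)); apply: eq_bigr => x _; rewrite scale1r. Qed.

Lemma mxrank_seqmx_lt : (0 < size s)%N -> \sum_(x <- s) x = 0 -> (\rank seqmx < size s)%N.
Proof.
move=> s_gt0 sum0; apply: mxrank_lt_ker (row1_neq0 F s_gt0) _.
by rewrite row1_mul_seqmx.
Qed.

(* Over a corank-one family the relation space is the line of \sum x = 0. *)
Lemma seq_relation_const (a : 'rV[F]_N -> F) :
  (size s <= \rank seqmx + 1)%N -> \sum_(x <- s) x = 0 ->
  \sum_(x <- s) a x *: x = 0 -> {in s &, forall x y, a x = a y}.
Proof.
move=> corank sum0 rel x y xs ys.
have s_gt0 : (0 < size s)%N by case: (s) xs.
have ones : (\row_(p < size s) 1) *m seqmx = 0 by rewrite row1_mul_seqmx.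
have [|t aE] := ker_colinear corank (row1_neq0 F s_gt0) ones (a := \row_p a s`_p).
  by rewrite -big_seq_scaleE.
have a_coord z : z \in s -> a z = t.
  move=> zs; have zi : (index z s < size s)%N by rewrite index_mem.
  have := congr1 (fun r : 'rV_(size s) => r 0 (Ordinal zi)) aE.
  by rewrite !mxE /= nth_index // mulr1.
by rewrite !a_coord.
Qed.

End SeqMatrix.

Section Spanning.

Variables (R : realType) (N k : nat) (c : 'I_N -> 'I_k) (s : seq 'rV[R]_N).
Hypothesis s_span : spans_E c s.

Lemma spans_E_rank : (N - k <= \rank (seqmx s))%N.
Proof.
pose M : 'M[R]_(N, k) := \matrix_(l, b) (c l == b)%:R.
have kerM_sub : (kermx M <= seqmx s)%MS.
  apply/row_subP => l; set v := row l (kermx M).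
  have bv : blocksum0 c v.
    have /matrixP vM0 : v *m M = 0 by rewrite -row_mul mulmx_ker row0.
    apply/forallP => b; apply/eqP; have := vM0 0 b; rewrite !mxE => vMb.
    rewrite -[RHS]vMb big_mkcond /=.
    by apply: eq_bigr => l' _; rewrite !mxE; case: (c l' == b); rewrite ?mulr1 ?mulr0.
  by have [coef ->] := s_span bv; rewrite -mul_row_seqmx submxMl.
have := mxrankS kerM_sub; rewrite mxrank_ker.
have := rank_leq_col M; lia.
Qed.

Lemma spans_E_block_support b : valid_blocks c ->
  exists2 x, x \in s & exists2 l, c l = b & x 0 l != 0.
Proof.
move=> blocks; have /card_gt1P [i [j [ib jb ij]]] := blocks b.
rewrite !inE in ib jb.
have cij : c i = c j by rewrite (eqP ib) (eqP jb).
have [coef rootE] := s_span (blocksum0_root_vec R cij).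
have /existsP [p nz_p] : [exists p : 'I_(size s), s`_p 0 i != 0].
  have : (root_vec i j : 'rV[R]_N) 0 i != 0.
    by rewrite !mxE !eqxx (negPf ij) subr0 oner_eq0.
  apply: contraTT => /existsPn all0; rewrite negbK rootE summxE.
  by apply/eqP/big1 => p _; rewrite mxE (eqP (negPn (all0 p))) mulr0.
by exists s`_p; [exact: mem_nth | exists i; [exact/eqP | exact: nz_p]].
Qed.

End Spanning.

Definition block_sqnorm (R : pzRingType) N k (c : 'I_N -> 'I_k) b (x : 'rV[R]_N) :=
  \sum_(l | c l == b) x 0 l ^+ 2.

Lemma block_sqnorm_tperm (R : pzRingType) N k (c : 'I_N -> 'I_k) b (x : 'rV[R]_N) i j :
  c i = c j -> block_sqnorm c b (col_perm (tperm i j) x) = block_sqnorm c b x.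
Proof.
move=> cij; rewrite /block_sqnorm [RHS](reindex_inj (@perm_inj _ (tperm i j))) /=.
by apply: eq_big => l; rewrite ?block_tperm // mxE.
Qed.

Lemma block_sqnorm_eq0P (R : realDomainType) N k (c : 'I_N -> 'I_k) b (x : 'rV[R]_N) :
  reflect (forall l, c l = b -> x 0 l = 0) (block_sqnorm c b x == 0).
Proof.
apply: (iffP eqP) => [/psumr_eq0P x0 l cl|x0]; last first.
  by apply: big1 => l /eqP /x0 ->; rewrite expr0n.
have /(_ l) : forall l, c l == b -> x 0 l ^+ 2 = 0 by apply: x0 => l' _; apply: sqr_ge0.
by rewrite cl eqxx => /(_ isT) /eqP; rewrite sqrf_eq0 => /eqP.
Qed.

Section RigidWeights.

Variables (R : realDomainType) (N k : nat) (c : 'I_N -> 'I_k) (s : seq 'rV[R]_N).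
Hypotheses (s_uniq : uniq s) (s_closed : tperm_closed c s).
Hypothesis s_E : forall x, x \in s -> blocksum0 c x.
Hypothesis relation_const : forall a : 'rV[R]_N -> R,
  \sum_(x <- s) a x *: x = 0 -> {in s &, forall x y, a x = a y}.

Lemma block_support_const b x y : x \in s -> y \in s ->
  (exists2 l, c l = b & y 0 l != 0) -> exists2 l, c l = b & x 0 l != 0.
Proof.
move=> xs ys [l cl yl].
have norm_eq : block_sqnorm c b y = block_sqnorm c b x.
  apply: relation_const ys xs.
  apply: (sum_invariant_scale_eq0 s_uniq s_closed s_E) => z i j _ cij.
  exact: block_sqnorm_tperm.
have /existsP [l' /andP [/eqP cl' xl']] : [exists l, (c l == b) && (x 0 l != 0)].
  have : block_sqnorm c b y != 0 by apply: contraNN yl => /block_sqnorm_eq0P /(_ l cl) ->.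
  rewrite norm_eq; apply: contraNT => /existsPn none; apply/block_sqnorm_eq0P => l' cl'.
  by apply/eqP; move: (none l'); rewrite cl' eqxx negbK.
by exists l'.
Qed.

Lemma coord_eq0_of_other_block x i j : x \in s -> c i != c j -> x 0 j != 0 -> x 0 i = 0.
Proof.
move=> xs cij xj; apply: (block_const_eq0 (c := c) (phi := fun l => x 0 l)).
  exact/eqP/(forallP (s_E xs) (c i)).
move=> i' ci'; have ci'j : c i' != c j by rewrite ci'.
have := relation_const (sum_cross_scale_eq0 s_uniq s_closed s_E ci'j) xs (s_closed xs ci').
rewrite !mxE tpermL tpermD => [/mulIf -> //| |]; apply: contraNneq cij => <- //.
by rewrite ci'.
Qed.

End RigidWeights.

Unset Implicit Arguments.
Theorem lemma5p6 (R : realType) (N k d : nat) (c : 'I_N -> 'I_k)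
  (rho : 'M[R[i]]_N -> 'M[R[i]]_d) (B : 'M[R]_N) (s : seq 'rV[R]_N) :
  (0 < k)%N -> valid_blocks c ->
  is_rep c rho -> faithful c rho ->
  inner_product_on_E c B -> weyl_invariant c B ->
  uniq s -> (forall x, x \in s <-> max_weight c rho B x) ->
  spans_E c s ->
  ((N - k).+1 <= size s)%N /\ (size s = (N - k).+1 -> k = 1%N).
Proof.
move=> k_gt0 blocks rep _ _ weyl s_uniq s_max s_span.
have s_E x : x \in s -> blocksum0 c x by move=> /s_max [[]].
have s_closed : tperm_closed c s.
  by move=> x i j /s_max x_max cij; apply/s_max; apply: max_weight_tperm.
have sum0 : \sum_(x <- s) x = 0.
  rewrite -[LHS](eq_bigr _ (fun x _ => scale1r x)).
  by apply: (sum_invariant_scale_eq0 s_uniq s_closed s_E (a := fun=> 1)).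
have [x0 x0s _] := spans_E_block_support s_span (Ordinal k_gt0) blocks.
have s_gt0 : (0 < size s)%N by case: (s) x0s.
have rank_lt := mxrank_seqmx_lt s_gt0 sum0.
have rank_ge := spans_E_rank s_span.
split=> [|size_s]; first exact: leq_ltn_trans rank_ge rank_lt.
apply/eqP; apply: contraT => k_neq1; have k_gt1 : (1 < k)%N by lia.
have corank : (size s <= \rank (seqmx s) + 1)%N by rewrite addn1 {1}size_s ltnS.
have rel_const := seq_relation_const corank sum0.
have support b : exists2 l, c l = b & x0 0 l != 0.
  have [y ys y_b] := spans_E_block_support s_span b blocks.
  exact: (block_support_const s_uniq s_closed s_E rel_const x0s ys y_b).
have [i ci xi] := support (Ordinal k_gt0).
have [j cj xj] := support (Ordinal k_gt1).
have cij : c i != c j by rewrite ci cj.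
by rewrite (coord_eq0_of_other_block s_uniq s_closed s_E rel_const x0s cij xj) eqxx in xi.
Qed.
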